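(* Let $N,\ell$ be positive integers, let $E_1,\dots,E_N>0$ and $0<\kappa\le 1$, and set $g_j=\frac{\kappa E_j}{\sum_{i=1}^N E_i}$ for $j=1,\dots,N$. Let $\Phi\in\mathbb{R}^{\ell\times N}$ be a random matrix with independent entries, where $\Phi_{ij}=\sqrt{1/g_j}$ with probability $g_j/2$, $\Phi_{ij}=0$ with probability $1-g_j$, and $\Phi_{ij}=-\sqrt{1/g_j}$ with probability $g_j/2$. For vectors $u,v\in\mathbb{R}^N$ define $x=\frac{1}{\sqrt{\ell}}\Phi u$ and $y=\frac{1}{\sqrt{\ell}}\Phi v\in\mathbb{R}^\ell$. Then $$\mathbb{E}[x^Ty]=u^Tv$$ and $$\mathrm{Var}(x^Ty)=\frac{1}{\ell}\Big((u^Tv)^2+\|u\|_2^2\|v\|_2^2+\sum_{j=1}^N\frac{1}{g_j}u_j^2v_j^2-3\sum_{j=1}^N u_j^2v_j^2\Big).$$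
   Context: $E_j$ is the energy harvested by sensor node $j$ and $\kappa$ is a sampling parameter; $g_j$ is the probability that entry $(i,j)$ of the projection matrix is nonzero. *)

From HB Require Import structures.
From mathcomp Require Import all_boot all_order all_algebra.
Set Implicit Arguments. Unset Strict Implicit. Unset Printing Implicit Defensive.
Import Order.TTheory GRing.Theory Num.Theory.
Local Open Scope ring_scope.

(* The random matrix Phi is modelled by its law: a sign pattern
   S : 'M['I_3]_(l,N), entry S i j = 0,1,2 meaning Phi_ij = -sqrt(1/g_j), 0,
   +sqrt(1/g_j), drawn with the product (independent entries) distribution. *)

Definition signval (R : ringType) (s : 'I_3) : R := s%:R - 1.

Definition sprob (R : fieldType) (gj : R) (s : 'I_3) : R :=
  if val s == 1%N then 1 - gj else gj / 2.

Definition Phi_of (R : rcfType) (l N : nat) (g : 'I_N -> R)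
  (S : 'M['I_3]_(l, N)) : 'M[R]_(l, N) :=
  \matrix_(i, j) (signval R (S i j) * Num.sqrt (1 / g j)).

Definition mprob (R : fieldType) (l N : nat) (g : 'I_N -> R)
  (S : 'M['I_3]_(l, N)) : R :=
  \prod_(i < l) \prod_(j < N) sprob (g j) (S i j).

Definition Expect (R : fieldType) (l N : nat) (g : 'I_N -> R)
  (F : 'M['I_3]_(l, N) -> R) : R :=
  \sum_(S : 'M['I_3]_(l, N)) mprob g S * F S.

Definition Variance (R : fieldType) (l N : nat) (g : 'I_N -> R)
  (F : 'M['I_3]_(l, N) -> R) : R :=
  Expect g (fun S => F S ^+ 2) - (Expect g F) ^+ 2.

From HB Require Import structures.
From mathcomp Require Import all_boot all_order all_algebra.
From mathcomp Require Import ring.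
Import Order.TTheory GRing.Theory Num.Theory.
Set Implicit Arguments. Unset Strict Implicit. Unset Printing Implicit Defensive.
Local Open Scope ring_scope.

(* Under the product law the expectation of a monomial in the entries of Phi
   factors into one-entry moments, which are 1, 0, 1, 0, 1/g_j in degrees
   0..4.  Hence E[Phi_p Phi_q] = [p = q], and E[Phi_p Phi_q Phi_r Phi_s] is the
   sum over the three pairings of {p,q,r,s} corrected by (1/g_j - 3) when all
   four indices coincide.  Now x^T y = (1/l) sum_i Z_i, where Z_i is the
   bilinear form of row i of Phi in u and v; contracting the moments against
   u and v gives E[Z_i] = u^T v and E[Z_i Z_i'] = (u^T v)^2 + [i = i'] K,
   and mean and variance follow by summing over i and i'. *)

Lemma sum_mx_prod (R : comNzRingType) (T : finType) (l N : nat)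
    (h : 'I_l * 'I_N -> T -> R) :
  \sum_(S : 'M[T]_(l, N)) \prod_t h t (S t.1 t.2) = \prod_t \sum_s h t s.
Proof.
rewrite bigA_distr_bigA /=.
rewrite (reindex (fun S : 'M[T]_(l, N) => [ffun t => S t.1 t.2])) /=.
  by apply: eq_bigr => S _; apply: eq_bigr => t _; rewrite ffunE.
apply: onW_bij; exists (fun f : {ffun 'I_l * 'I_N -> T} => \matrix_(i, j) f (i, j)).
  by move=> S; apply/matrixP => i j; rewrite !mxE ffunE.
by move=> f; apply/ffunP => -[i j]; rewrite ffunE mxE.
Qed.

Section Expectation.

Variables (R : fieldType) (l N : nat) (g : 'I_N -> R).
Implicit Types F G : 'M['I_3]_(l, N) -> R.

Lemma eq_Expect F G : F =1 G -> Expect g F = Expect g G.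
Proof. by move=> eqFG; apply: eq_bigr => S _; rewrite eqFG. Qed.

Lemma Expect_sum (I : finType) (F : I -> 'M['I_3]_(l, N) -> R) :
  Expect g (fun S => \sum_k F k S) = \sum_k Expect g (F k).
Proof. by rewrite /Expect exchange_big; apply: eq_bigr => S _; rewrite mulr_sumr. Qed.

Lemma Expect_mull c F : Expect g (fun S => c * F S) = c * Expect g F.
Proof. by rewrite /Expect mulr_sumr; apply: eq_bigr => S _; rewrite mulrCA. Qed.

Lemma Expect_prod (f : 'I_l * 'I_N -> 'I_3 -> R) :
  Expect g (fun S => \prod_t f t (S t.1 t.2)) =
  \prod_t \sum_s sprob (g t.2) s * f t s.
Proof.
rewrite /Expect -sum_mx_prod; apply: eq_bigr => S _.
by rewrite /mprob pair_big -big_split.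
Qed.

End Expectation.

Section Moments.

Variables (R : rcfType) (N : nat) (g : 'I_N -> R).

Definition entryval (j : 'I_N) (s : 'I_3) : R := signval R s * Num.sqrt (1 / g j).

Definition moment (j : 'I_N) (k : nat) : R :=
  \sum_s sprob (g j) s * entryval j s ^+ k.

Lemma momentE j k :
  moment j k = g j / 2 * ((-1) ^+ k + 1) * Num.sqrt (1 / g j) ^+ k
               + (1 - g j) * 0 ^+ k.
Proof.
rewrite /moment !big_ord_recr big_ord0 /= add0r /entryval /signval /sprob /=.
rewrite !exprMn sub0r subrr (_ : 2 - 1 = 1 :> R); last by rewrite -addrA subrr addr0.
rewrite expr1n expr0n; case: k => [|k] /=; ring.
Qed.

Lemma moment_odd j k : odd k -> moment j k = 0.
Proof.
move=> k_odd; rewrite momentE -signr_odd k_odd expr1 addNr mulr0 mul0r add0r.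
by case: k k_odd => // k _; rewrite expr0n mulr0.
Qed.

Lemma moment0 j : moment j 0 = 1.
Proof. by rewrite momentE !expr0; field. Qed.

Hypothesis g_gt0 : forall j, 0 < g j.

Lemma sqr_entry_scale j : Num.sqrt (1 / g j) ^+ 2 = (g j)^-1.
Proof. by rewrite sqr_sqrtr div1r // invr_ge0 ltW. Qed.

Lemma moment2 j : moment j 2 = 1.
Proof.
have gj_neq0 : g j != 0 by rewrite gt_eqF.
by rewrite momentE sqr_entry_scale sqrrN expr1n expr0n /=; field.
Qed.

Lemma moment4 j : moment j 4 = (g j)^-1.
Proof.
have gj_neq0 : g j != 0 by rewrite gt_eqF.
rewrite momentE (_ : 4 = 2 * 2)%N // !exprM sqr_entry_scale sqrrN expr1n.
by rewrite expr0n /=; field.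
Qed.

End Moments.

Lemma big_prod_count_mem (R : comNzRingType) (T : finType) (x : T -> R) (s : seq T) :
  \prod_(p <- s) x p = \prod_t x t ^+ count_mem t s.
Proof.
elim: s => [|p s IHs]; first by rewrite big_nil big1 // => t _; rewrite expr0.
rewrite big_cons IHs (bigD1 p) //= [in RHS](bigD1 p) //= eqxx exprD expr1 mulrA.
congr (_ * _); apply: eq_bigr => t /negPf; rewrite eq_sym => ->.
by rewrite add0n.
Qed.

Local Ltac eq_false := rewrite /= ?eqxx; repeat match goal with
  | H : is_true (?x != ?y) |- context [?x == ?y] => rewrite (negPf H)
  | H : is_true (?x != ?y) |- context [?y == ?x] => rewrite [y == x]eq_sym (negPf H)
  end; rewrite /=.

Section EntryProducts.

Variables (R : rcfType) (l N : nat) (g : 'I_N -> R).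
Hypothesis g_gt0 : forall j, 0 < g j.

Definition entry (S : 'M['I_3]_(l, N)) (t : 'I_l * 'I_N) : R :=
  entryval g t.2 (S t.1 t.2).

Implicit Types (n : 'I_l * 'I_N -> nat) (p q : 'I_l * 'I_N).

Lemma Expect_monomial n :
  Expect g (fun S => \prod_t entry S t ^+ n t) = \prod_t moment g t.2 (n t).
Proof. exact: (Expect_prod g (fun t s => entryval g t.2 s ^+ n t)). Qed.

Lemma prod_moment_odd n p : odd (n p) -> \prod_t moment g t.2 (n t) = 0.
Proof. by move=> np_odd; rewrite (bigD1 p) //= moment_odd ?mul0r. Qed.

Lemma prod_moment_even n :
  (forall t, (n t == 0)%N || (n t == 2)%N) -> \prod_t moment g t.2 (n t) = 1.
Proof.
move=> n_even; apply: big1 => t _.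
by case/orP: (n_even t) => /eqP ->; rewrite ?moment0 ?moment2.
Qed.

Lemma prod_moment_single n p : n p = 4%N -> (forall t, t != p -> n t = 0%N) ->
  \prod_t moment g t.2 (n t) = (g p.2)^-1.
Proof.
move=> np4 n0; rewrite (bigD1 p) //= np4 moment4 // big1 ?mulr1 // => t /n0 ->.
exact: moment0.
Qed.

Lemma Expect_entry_seq ps :
  Expect g (fun S => \prod_(p <- ps) entry S p) =
  \prod_t moment g t.2 (count_mem t ps).
Proof.
rewrite -Expect_monomial; apply: eq_Expect => S.
exact: big_prod_count_mem.
Qed.

Lemma Expect_entry2 p q :
  Expect g (fun S => entry S p * entry S q) = (p == q)%:R.
Proof.
transitivity (Expect g (fun S => \prod_(t <- [:: p; q]) entry S t)).
  by apply: eq_Expect => S; rewrite !big_cons big_nil mulr1.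
rewrite Expect_entry_seq; case: (eqVneq p q) => [<-|neq_pq].
  by apply: prod_moment_even => t /=; case: (p == t).
by apply: (prod_moment_odd (p := p)); eq_false.
Qed.

Lemma Expect_entry4 p1 p2 p3 p4 :
  Expect g (fun S => entry S p1 * entry S p2 * entry S p3 * entry S p4) =
  (p1 == p2)%:R * (p3 == p4)%:R + (p1 == p3)%:R * (p2 == p4)%:R
  + (p1 == p4)%:R * (p2 == p3)%:R
  + ((g p1.2)^-1 - 3) * [&& p1 == p2, p1 == p3 & p1 == p4]%:R.
Proof.
transitivity (Expect g (fun S => \prod_(t <- [:: p1; p2; p3; p4]) entry S t)).
  by apply: eq_Expect => S; rewrite !big_cons big_nil mulr1 !mulrA.
rewrite Expect_entry_seq.
have odd_at ps p : odd (count_mem p ps) -> _ :=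
  prod_moment_odd (n := fun t => count_mem t ps) (p := p).
case: (eqVneq p1 p2) => [<-|n12].
  case: (eqVneq p1 p3) => [<-|n13].
    case: (eqVneq p1 p4) => [<-|n14].
      rewrite (prod_moment_single (p := p1)) /=; first by ring.
        by eq_false.
      by move=> t n1t; eq_false.
    by rewrite (odd_at _ p4); eq_false; [ring|].
  case: (eqVneq p1 p4) => [<-|n14].
    by rewrite (odd_at _ p3); eq_false; [ring|].
  case: (eqVneq p3 p4) => [<-|n34].
    rewrite prod_moment_even; eq_false; first ring.
    by move=> t; case: (eqVneq p1 t) => [<-|_]; eq_false; case: (p3 == t).
  by rewrite (odd_at _ p3); eq_false; [ring|].
case: (eqVneq p1 p3) => [<-|n13].
  case: (eqVneq p1 p4) => [<-|n14].
    by rewrite (odd_at _ p2); eq_false; [ring|].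
  case: (eqVneq p2 p4) => [<-|n24].
    rewrite prod_moment_even; eq_false; first ring.
    by move=> t; case: (eqVneq p1 t) => [<-|_]; eq_false; case: (p2 == t).
  by rewrite (odd_at _ p2); eq_false; [ring|].
case: (eqVneq p1 p4) => [<-|n14].
  case: (eqVneq p2 p3) => [<-|n23].
    rewrite prod_moment_even; eq_false; first ring.
    by move=> t; case: (eqVneq p1 t) => [<-|_]; eq_false; case: (p2 == t).
  by rewrite (odd_at _ p2); eq_false; [ring|].
by rewrite (odd_at _ p1); eq_false; [ring|].
Qed.

End EntryProducts.

Section Contractions.

Variables (R : comNzRingType) (N : nat) (u v : 'I_N -> R).

Lemma sum_mul_eq (T : finType) (F : T -> R) (a : T) :
  \sum_b F b * (a == b)%:R = F a.
Proof.
rewrite (bigD1 a) //= eqxx mulr1 big1 ?addr0 // => b /negPf.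
by rewrite eq_sym => ->; rewrite mulr0.
Qed.

Definition dot (x y : 'I_N -> R) := \sum_a x a * y a.

Local Notation quad4 a b c d := (u a * v b * u c * v d).

Lemma contract_ab_cd :
  \sum_a \sum_b \sum_c \sum_d quad4 a b c d * ((a == b)%:R * (c == d)%:R)
  = dot u v ^+ 2.
Proof.
transitivity (\sum_a \sum_b (u a * v b * (a == b)%:R) * \sum_c \sum_d (u c * v d * (c == d)%:R)).
  do 2! (apply: eq_bigr => ? _); rewrite mulr_sumr; apply: eq_bigr => c _.
  by rewrite mulr_sumr; apply: eq_bigr => d _; ring.
rewrite expr2 mulr_suml; apply: eq_bigr => a _.
by rewrite -mulr_suml !sum_mul_eq; congr (_ * _); apply: eq_bigr => c _; rewrite sum_mul_eq.
Qed.

Lemma contract_ac_bd :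
  \sum_a \sum_b \sum_c \sum_d quad4 a b c d * ((a == c)%:R * (b == d)%:R)
  = dot u u * dot v v.
Proof.
transitivity (\sum_a \sum_b \sum_c ((u a * v b * u c) * (a == c)%:R) * \sum_d (v d * (b == d)%:R)).
  do 3! (apply: eq_bigr => ? _); rewrite mulr_sumr; apply: eq_bigr => ? _; ring.
under eq_bigr => a _ do under eq_bigr => b _ do rewrite sum_mul_eq -mulr_suml sum_mul_eq.
rewrite mulr_suml; apply: eq_bigr => a _; rewrite mulr_sumr; apply: eq_bigr => b _; ring.
Qed.

Lemma contract_ad_bc :
  \sum_a \sum_b \sum_c \sum_d quad4 a b c d * ((a == d)%:R * (b == c)%:R)
  = dot u v ^+ 2.
Proof.
transitivity (\sum_a \sum_b \sum_c ((u a * v b * u c) * (b == c)%:R) * \sum_d (v d * (a == d)%:R)).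
  do 3! (apply: eq_bigr => ? _); rewrite mulr_sumr; apply: eq_bigr => ? _; ring.
under eq_bigr => a _ do under eq_bigr => b _ do rewrite sum_mul_eq -mulr_suml sum_mul_eq.
rewrite expr2 mulr_suml; apply: eq_bigr => a _; rewrite mulr_sumr; apply: eq_bigr => b _; ring.
Qed.

Lemma contract_diag (w : 'I_N -> R) :
  \sum_a \sum_b \sum_c \sum_d quad4 a b c d * (w a * [&& a == b, a == c & a == d]%:R)
  = \sum_a w a * u a ^+ 2 * v a ^+ 2.
Proof.
apply: eq_bigr => a _.
transitivity (\sum_b \sum_c ((u a * v b * u c * w a) * (a == b)%:R * (a == c)%:R)
                * \sum_d (v d * (a == d)%:R)).
  apply: eq_bigr => b _; apply: eq_bigr => c _; rewrite mulr_sumr; apply: eq_bigr => d _.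
  by case: (a == b); case: (a == c); case: (a == d) => /=; ring.
under eq_bigr => b _ do under eq_bigr => c _ do rewrite sum_mul_eq.
under eq_bigr => b _ do rewrite -mulr_suml sum_mul_eq.
rewrite -mulr_suml sum_mul_eq; ring.
Qed.

Lemma contract_fourth_moment (w : 'I_N -> R) (same_row : bool) :
  \sum_a \sum_b \sum_c \sum_d quad4 a b c d *
   ((a == b)%:R * (c == d)%:R
    + (same_row && (a == c))%:R * (same_row && (b == d))%:R
    + (same_row && (a == d))%:R * (same_row && (b == c))%:R
    + (w a - 3) * [&& a == b, same_row && (a == c) & same_row && (a == d)]%:R)
  = dot u v ^+ 2 + same_row%:R * (dot u u * dot v v + dot u v ^+ 2
      + \sum_a (w a - 3) * u a ^+ 2 * v a ^+ 2).
Proof.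
case: same_row => /=.
  rewrite mul1r -{2}contract_ad_bc -contract_ab_cd -contract_ac_bd.
  rewrite -(contract_diag (fun a => w a - 3)) -!big_split /=.
  by do 4! (apply: eq_bigr => ? _; rewrite -?big_split /=); ring.
rewrite -contract_ab_cd !mul0r addr0; do 4! (apply: eq_bigr => ? _).
by rewrite andbF /=; ring.
Qed.

End Contractions.

Section RowForms.

Variables (R : rcfType) (l N : nat) (g : 'I_N -> R) (u v : 'I_N -> R).
Hypothesis g_gt0 : forall j, 0 < g j.

Definition rowform (S : 'M['I_3]_(l, N)) (i : 'I_l) : R :=
  \sum_a \sum_b u a * v b * (entry g S (i, a) * entry g S (i, b)).

Lemma Expect_rowform i : Expect g (rowform^~ i) = dot u v.
Proof.
rewrite Expect_sum; apply: eq_bigr => a _; rewrite Expect_sum.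
under eq_bigr => b _ do rewrite Expect_mull Expect_entry2 // xpair_eqE eqxx.
exact: sum_mul_eq.
Qed.

Definition rowform_cov : R := dot u u * dot v v + dot u v ^+ 2
  + \sum_a ((g a)^-1 - 3) * u a ^+ 2 * v a ^+ 2.

Lemma rowform_covE : rowform_cov = dot u u * dot v v + dot u v ^+ 2
  + \sum_a (g a)^-1 * u a ^+ 2 * v a ^+ 2 - 3 * \sum_a u a ^+ 2 * v a ^+ 2.
Proof.
rewrite /rowform_cov mulr_sumr -[RHS]addrA -sumrB.
by congr (_ + _); apply: eq_bigr => a _; ring.
Qed.

Lemma Expect_rowform_mul i i' :
  Expect g (fun S => rowform S i * rowform S i') =
  dot u v ^+ 2 + (i == i')%:R * rowform_cov.
Proof.
rewrite -(contract_fourth_moment u v (fun a => (g a)^-1)).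
rewrite (@eq_Expect _ _ _ _ _ (fun S => \sum_a \sum_b \sum_c \sum_d u a * v b * u c * v d *
    (entry g S (i, a) * entry g S (i, b) * entry g S (i', c) * entry g S (i', d)))).
  rewrite Expect_sum; apply: eq_bigr => a _; rewrite Expect_sum; apply: eq_bigr => b _.
  rewrite Expect_sum; apply: eq_bigr => c _; rewrite Expect_sum; apply: eq_bigr => d _.
  by rewrite Expect_mull Expect_entry4 // !xpair_eqE !eqxx.
move=> S; rewrite /rowform mulr_suml; apply: eq_bigr => a _; rewrite mulr_suml.
apply: eq_bigr => b _; rewrite mulr_sumr; apply: eq_bigr => c _.
by rewrite mulr_sumr; apply: eq_bigr => d _; ring.
Qed.

Lemma Expect_sum_rowform :
  Expect g (fun S => \sum_i rowform S i) = l%:R * dot u v.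
Proof.
rewrite Expect_sum; under eq_bigr do rewrite Expect_rowform.
by rewrite sumr_const card_ord mulr_natl.
Qed.

Lemma Expect_sqr_sum_rowform :
  Expect g (fun S => (\sum_i rowform S i) ^+ 2) =
  (l%:R * dot u v) ^+ 2 + l%:R * rowform_cov.
Proof.
rewrite (@eq_Expect _ _ _ _ _ (fun S => \sum_i \sum_i' rowform S i * rowform S i')); last first.
  by move=> S; rewrite expr2 mulr_suml; apply: eq_bigr => i _; rewrite mulr_sumr.
rewrite Expect_sum; under eq_bigr do rewrite Expect_sum.
under eq_bigr do under eq_bigr do rewrite Expect_rowform_mul.
under eq_bigr do
  rewrite big_split /= sumr_const card_ord (eq_bigr _ (fun _ _ => mulrC _ _)) sum_mul_eq.
by rewrite big_split /= !sumr_const card_ord; ring.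
Qed.

End RowForms.

Lemma Phi_of_bilinear (R : rcfType) (l N : nat) (g : 'I_N -> R) (c : R)
    (S : 'M['I_3]_(l, N)) (x y : 'cV[R]_N) :
  ((c *: (Phi_of g S *m x))^T *m (c *: (Phi_of g S *m y))) 0 0 =
  c ^+ 2 * \sum_i rowform g (fun a => x a 0) (fun a => y a 0) S i.
Proof.
rewrite mxE expr2 mulr_sumr; apply: eq_bigr => i _.
rewrite !mxE mulrACA big_distrlr /=; congr (_ * _).
apply: eq_bigr => a _; apply: eq_bigr => b _.
by rewrite !mxE /entry /entryval /=; ring.
Qed.

Lemma mx_dotE (R : comNzRingType) (N : nat) (x y : 'cV[R]_N) :
  (x^T *m y) 0 0 = dot (fun a => x a 0) (fun a => y a 0).
Proof. by rewrite mxE; apply: eq_bigr => a _; rewrite mxE. Qed.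

Theorem proposition1 (R : rcfType) (N l : nat) (HN : (0 < N)%N) (Hl : (0 < l)%N)
  (E : 'I_N -> R) (kappa : R)
  (HE : forall j, 0 < E j) (Hk0 : 0 < kappa) (Hk1 : kappa <= 1)
  (u v : 'cV[R]_N) :
  let g := fun j : 'I_N => kappa * E j / \sum_(i < N) E i in
  let X := fun S : 'M['I_3]_(l, N) =>
    let x := (Num.sqrt l%:R)^-1 *: (Phi_of g S *m u) in
    let y := (Num.sqrt l%:R)^-1 *: (Phi_of g S *m v) in
    (x^T *m y) 0 0 in
  Expect g X = (u^T *m v) 0 0 /\
  Variance g X =
    l%:R^-1 * (((u^T *m v) 0 0) ^+ 2 + (u^T *m u) 0 0 * (v^T *m v) 0 0
      + \sum_(j < N) (g j)^-1 * u j 0 ^+ 2 * v j 0 ^+ 2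
      - 3 * \sum_(j < N) u j 0 ^+ 2 * v j 0 ^+ 2).
Proof.
move=> g X.
have sumE_gt0 : 0 < \sum_(i < N) E i.
  rewrite (bigD1 (Ordinal HN)) //= ltr_wpDr ?sumr_ge0 // => i _.
  exact: ltW.
have g_gt0 j : 0 < g j by rewrite divr_gt0 ?mulr_gt0.
have l_neq0 : l%:R != 0 :> R by rewrite pnatr_eq0 -lt0n.
pose uf : 'I_N -> R := fun a => u a 0; pose vf : 'I_N -> R := fun a => v a 0.
have XE S : X S = l%:R^-1 * \sum_i rowform g uf vf S i.
  by rewrite /X Phi_of_bilinear exprVn sqr_sqrtr ?ler0n.
have EX : Expect g X = dot uf vf.
  by rewrite (eq_Expect _ XE) Expect_mull Expect_sum_rowform // mulKf.
split; first by rewrite EX mx_dotE.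
have X2E S : X S ^+ 2 = l%:R^-2 * (\sum_i rowform g uf vf S i) ^+ 2.
  by rewrite XE exprMn exprVn.
rewrite /Variance EX (eq_Expect _ X2E) Expect_mull Expect_sqr_sum_rowform //.
rewrite !mx_dotE rowform_covE.
by field.
Qed.
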